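(* Let $n\ge1$, $L>0$, $D\subseteq\mathbb{R}$ compact, and consider an $n$-qubit system with dynamics $\rho_k=T(u_k)\rho_{k-1}$ and output $\bar y_k=h(\rho_k)$, where $h(\rho)$ is a real polynomial (of some degree $R$, with constant term) in the variables $\langle Z^{(i)}\rangle={\rm Tr}(\rho Z^{(i)})$, $i=1,\dots,n$. Suppose that (i) there is $0<\epsilon\le1$ with $\sup_{A\in H_0(2^n),A\ne0}\|T(x)A\|_2/\|A\|_2\le1-\epsilon$ for all $x\in D\cap[-L,L]$, and (ii) $T$ is continuous in the sense that for every $\epsilon'>0$ there is $\delta_T(\epsilon')>0$ with $\|T(x)-T(y)\|_{2-2}<\epsilon'$ whenever $x,y\in D\cap[-L,L]$ and $|x-y|<\delta_T(\epsilon')$. Then for any null sequence $w$, the induced filter $M^T$ and its corresponding functional $F^T$ are $w$-fading memory.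
   Context: $T(x)$, $x\in D\cap[-L,L]$, are CPTP maps on $2^n\times 2^n$ complex matrices; $H_0(2^n)$ is the space of traceless Hermitian $2^n\times2^n$ matrices; $\|\cdot\|_2$ is the Schatten 2-norm and $\|S\|_{2-2}=\sup_{\|A\|_2=1}\|SA\|_2$ over all complex $2^n\times2^n$ matrices $A$. $Z^{(i)}$ is the Pauli $Z$ operator acting on qubit $i$. $K_L(D)$: real sequences $\{u_k\}_{k\in\mathbb{Z}}$ with values in $D\cap[-L,L]$; $K_L^-(D)$: same indexed by $\mathbb{Z}^-=\{\dots,-1,0\}$. The induced filter is $M^T(u)_k=h\big(\lim_{N\to\infty}T(u_k)\cdots T(u_{k-N})\rho_{-N}\big)$ (the limit exists and is independent of the density operators $\rho_{-N}$ under (i)); its functional is $F^T(u_-)=M^T(u)_0$ for any $u$ extending $u_-\in K_L^-(D)$. A null sequence is a decreasing $w:\{0,1,\dots\}\to(0,1]$ with $w_k\to0$; $\|u\|_w=\sup_{k\le0}|u_k|w_{-k}$. A time-invariant causal filter is $w$-fading memory iff its functional is continuous on $(K_L^-(D),\|\cdot\|_w)$. *)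

From HB Require Import structures.
From mathcomp Require Import all_boot all_order all_algebra.
From mathcomp Require Import complex.
From mathcomp Require Import all_classical all_reals all_analysis.
Set Implicit Arguments. Unset Strict Implicit. Unset Printing Implicit Defensive.
Import Order.TTheory GRing.Theory Num.Theory.
Import numFieldNormedType.Exports.
Local Open Scope classical_set_scope.
Local Open Scope ring_scope.

Notation Mat R n := ('M[R[i]]_(2 ^ n)).

Section QRC.
Variable R : realType.

(* Positive semidefiniteness of a matrix indexed by a finite type I:
   v^* X v >= 0 (real, nonnegative) for every complex vector v. *)
Definition psd_fun (I : finType) (X : I -> I -> R[i]) : Prop :=
  forall v : I -> R[i],
    0 <= \sum_(p : I) \sum_(q : I) conjc (v p) * X p q * v q.

Definition psd_mx (N : nat) (A : 'M[R[i]]_N) : Prop := psd_fun (fun i j => A i j).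

Definition density (N : nat) (A : 'M[R[i]]_N) : Prop := psd_mx A /\ \tr A = 1.

(* Hermitian / traceless Hermitian matrices (the space H_0) *)
Definition hermitian (N : nat) (A : 'M[R[i]]_N) : Prop :=
  forall i j, A j i = conjc (A i j).
Definition traceless_herm (N : nat) (A : 'M[R[i]]_N) : Prop :=
  hermitian A /\ \tr A = 0.

(* complete positivity: for every k, id_k (x) S maps positive semidefinite
   block matrices (indexed by 'I_k * 'I_N) to positive semidefinite ones *)
Definition completely_positive (N : nat) (S : 'M[R[i]]_N -> 'M[R[i]]_N) : Prop :=
  forall (k : nat) (X : ('I_k * 'I_N)%type -> ('I_k * 'I_N)%type -> R[i]),
    psd_fun X ->
    psd_fun (fun p q => S (\matrix_(i, j) X (p.1, i) (q.1, j)) p.2 q.2).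

Definition trace_preserving (N : nat) (S : 'M[R[i]]_N -> 'M[R[i]]_N) : Prop :=
  forall A, \tr (S A) = \tr A.

Definition CPTP (N : nat) (S : 'M[R[i]]_N -> 'M[R[i]]_N) : Prop :=
  linear S /\ completely_positive S /\ trace_preserving S.

Definition hs_norm (N : nat) (A : 'M[R[i]]_N) : R :=
  Num.sqrt (\sum_i \sum_j complex.Re (A i j * conjc (A i j))).

Definition opnorm22 (N : nat) (S : 'M[R[i]]_N -> 'M[R[i]]_N) : R :=
  sup [set r | exists A : 'M[R[i]]_N, hs_norm A = 1 /\ r = hs_norm (S A)].

(* Pauli Z acting on qubit i of an n-qubit register: diagonal matrix whose
   entry at basis state j is (-1)^(bit i of j) *)
Definition pauliZ (n : nat) (i : 'I_n) : Mat R n :=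
  \matrix_(j, k) ((j == k)%:R * (if odd (j %/ 2 ^ i) then -1 else 1)).

(* expectation value <Z^(i)> = Tr(rho Z^(i)) (real for Hermitian rho) *)
Definition expZ (n : nat) (rho : Mat R n) (i : 'I_n) : R :=
  complex.Re (\tr (rho *m pauliZ i)).

Definition poly_obs (n d : nat) (c : {ffun 'I_n -> 'I_d.+1} -> R)
    (rho : Mat R n) : R :=
  \sum_(a : {ffun 'I_n -> 'I_d.+1} | (\sum_i (a i : nat) <= d)%N)
     c a * \prod_i expZ rho i ^+ a i.

Definition mx_conv_to (N : nat) (X : nat -> 'M[R[i]]_N) (Y : 'M[R[i]]_N) : Prop :=
  (fun m => hs_norm (X m - Y)) @ \oo --> (0 : R).

(* evolve T u k m X = T(u_k) T(u_{k-1}) ... T(u_{k-m}) X *)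
Fixpoint evolve (N : nat) (T : R -> 'M[R[i]]_N -> 'M[R[i]]_N) (u : int -> R)
    (k : int) (m : nat) (X : 'M[R[i]]_N) : 'M[R[i]]_N :=
  match m with
  | O => T (u k) X
  | m'.+1 => T (u k) (evolve T u (k - 1) m' X)
  end.

(* the state at time k: the limit of T(u_k)...T(u_{k-m}) rho_{-m} as m -> oo,
   the same for every choice of density operators rho_{-m} *)
Definition limit_state (N : nat) (T : R -> 'M[R[i]]_N -> 'M[R[i]]_N)
    (u : int -> R) (k : int) : 'M[R[i]]_N :=
  xget 0 [set Y | forall rho : nat -> 'M[R[i]]_N,
      (forall m, density (rho m)) -> mx_conv_to (fun m => evolve T u k m (rho m)) Y].

Definition induced_filter (N : nat) (T : R -> 'M[R[i]]_N -> 'M[R[i]]_N)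
    (h : 'M[R[i]]_N -> R) (u : int -> R) (k : int) : R :=
  h (limit_state T u k).

Definition DL (D : set R) (L : R) : set R := D `&` `[- L, L].

Definition KL (D : set R) (L : R) : set (int -> R) :=
  [set u | forall k, DL D L (u k)].

(* K_L^-(D): left-infinite sequences; u_ : nat -> R with u_ j = u_{-j} *)
Definition KLm (D : set R) (L : R) : set (nat -> R) :=
  [set u | forall j, DL D L (u j)].

Definition extend (um : nat -> R) : int -> R :=
  fun k => match k with Posz _ => um 0%N
                      | Negz m => um m.+1 end.

Definition functional (M : (int -> R) -> int -> R) (um : nat -> R) : R :=
  M (extend um) 0.

Definition null_seq (w : nat -> R) : Prop :=
  (forall k, 0 < w k <= 1) /\ (forall k, w k.+1 <= w k) /\ w @ \oo --> (0 : R).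

Definition wnorm (w : nat -> R) (u : nat -> R) : R :=
  sup (range (fun j => `|u j| * w j)).

Definition w_continuous (D : set R) (L : R) (w : nat -> R) (F : (nat -> R) -> R)
    : Prop :=
  forall u, KLm D L u -> forall e : R, 0 < e -> exists2 d : R, 0 < d &
    forall v, KLm D L v -> wnorm w (u - v) < d -> `|F u - F v| < e.

Definition causal (D : set R) (L : R) (M : (int -> R) -> int -> R) : Prop :=
  forall u v k, KL D L u -> KL D L v -> (forall j, (j <= k)%R -> u j = v j) ->
    M u k = M v k.

Definition time_invariant (D : set R) (L : R) (M : (int -> R) -> int -> R) : Prop :=
  forall u k, KL D L u -> M (fun j => u (j + 1)%R) k = M u (k + 1)%R.

(* a time-invariant causal filter is w-fading memory iff its functional is
   continuous on (K_L^-(D), ||.||_w) *)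
Definition fading_memory_filter (D : set R) (L : R) (w : nat -> R)
    (M : (int -> R) -> int -> R) : Prop :=
  time_invariant D L M /\ causal D L M /\ w_continuous D L w (functional M).

End QRC.

From HB Require Import structures.
From mathcomp Require Import all_boot all_order all_algebra.
From mathcomp Require Import complex.
From mathcomp Require Import all_classical all_reals all_analysis.
From mathcomp Require Import ring lra.
Set Implicit Arguments. Unset Strict Implicit. Unset Printing Implicit Defensive.
Import Order.TTheory GRing.Theory Num.Theory.
Import numFieldNormedType.Exports.
Local Open Scope classical_set_scope.
Local Open Scope ring_scope.

(* Hypothesis (i) makes every T(x) a strict contraction, with ratio q = 1 - eps,
   on differences of density operators, which are traceless Hermitian.  Hence the
   backward products T(u_k) ... T(u_{k-m}) rho forget their initial state
   geometrically fast: they form a Cauchy sequence whose limit is the state at time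
   k, within O(q^m) of every truncation.  The state at time 0 thus depends, up to a
   small error, only on the m + 1 most recent inputs, and by (ii) it moves little when
   these inputs move little; a weighted distance below delta * w_m forces exactly
   that.  The output is a polynomial in the Pauli-Z expectations, which are Lipschitz
   in the Hilbert-Schmidt norm, so it inherits the continuity.  Time invariance and
   causality are read off the backward products. *)

Section CauchySup.
Variable R : realType.

Definition cauchy_sup (a e : nat -> R) : R := sup (range (fun m => a m - e m)).

Lemma cauchy_supP (a e : nat -> R) : (forall m, 0 <= e m) ->
  (forall m m', (m <= m')%N -> `|a m - a m'| <= e m) ->
  forall m, `|a m - cauchy_sup a e| <= e m.
Proof.
move=> e_ge0 a_cauchy.
have lower_le_upper m m' : a m - e m <= a m' + e m'.
  have [mm'|/ltnW m'm] := leqP m m'.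
    by have := a_cauchy _ _ mm'; have := e_ge0 m'; rewrite ler_norml; lra.
  by have := a_cauchy _ _ m'm; have := e_ge0 m; rewrite ler_norml; lra.
move=> m; rewrite ler_norml; apply/andP; split.
  suff : cauchy_sup a e <= a m + e m by lra.
  apply: ge_sup; first by exists (a 0%N - e 0%N), 0%N.
  by move=> _ [m' _ <-]; exact: lower_le_upper.
suff : a m - e m <= cauchy_sup a e by lra.
apply: ub_le_sup; last by exists m.
by exists (a 0%N + e 0%N) => _ [m' _ <-]; exact: lower_le_upper.
Qed.
End CauchySup.

Section HilbertSchmidt.
Variables (R : realType) (N : nat).
Implicit Types (z : R[i]) (A B : 'M[R[i]]_N).

Definition sqmod z : R := complex.Re z ^+ 2 + complex.Im z ^+ 2.

Lemma sqmod_ge0 z : 0 <= sqmod z.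
Proof. by rewrite addr_ge0 ?sqr_ge0. Qed.

Lemma sqmodM z1 z2 : sqmod (z1 * z2) = sqmod z1 * sqmod z2.
Proof. by case: z1 z2 => [a b] [c d]; rewrite /sqmod /=; ring. Qed.

Lemma sqmod_real (x : R) : Num.sqrt (sqmod x%:C%C) = `|x|.
Proof. by rewrite /sqmod /= expr0n addr0 sqrtr_sqr. Qed.

Definition hs2 A : R := \sum_i \sum_j sqmod (A i j).

Lemma hs2_ge0 A : 0 <= hs2 A.
Proof. by do 2![apply: sumr_ge0 => ? _]; exact: sqmod_ge0. Qed.

Lemma hs_normE A : hs_norm A = Num.sqrt (hs2 A).
Proof.
congr Num.sqrt; apply: eq_bigr => i _; apply: eq_bigr => j _.
by case: (A i j) => a b; rewrite /sqmod /=; ring.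
Qed.

Lemma hs_norm_ge0 A : 0 <= hs_norm A.
Proof. by rewrite hs_normE sqrtr_ge0. Qed.

Lemma hs_norm_sqr A : hs_norm A ^+ 2 = hs2 A.
Proof. by rewrite hs_normE sqr_sqrtr ?hs2_ge0. Qed.

Lemma sqmod_le_hs2 A i j : sqmod (A i j) <= hs2 A.
Proof.
rewrite /hs2 (bigD1 i) //= (bigD1 j) //= -addrA lerDl.
by rewrite addr_ge0 //; do ?[apply: sumr_ge0 => ? _]; exact: sqmod_ge0.
Qed.

Lemma sqrt_sqmod_le_hs A i j : Num.sqrt (sqmod (A i j)) <= hs_norm A.
Proof. by rewrite hs_normE ler_sqrt ?hs2_ge0 ?sqmod_le_hs2. Qed.

Lemma Re_le_hs A i j : `|complex.Re (A i j)| <= hs_norm A.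
Proof.
apply: le_trans (sqrt_sqmod_le_hs A i j).
by rewrite -sqrtr_sqr ler_sqrt ?sqmod_ge0 // lerDl sqr_ge0.
Qed.

Lemma Im_le_hs A i j : `|complex.Im (A i j)| <= hs_norm A.
Proof.
apply: le_trans (sqrt_sqmod_le_hs A i j).
by rewrite -sqrtr_sqr ler_sqrt ?sqmod_ge0 // lerDr sqr_ge0.
Qed.

Lemma hs_norm_eq0 A : hs_norm A = 0 -> A = 0.
Proof.
move=> A0; apply/matrixP => i j; rewrite mxE.
have := Re_le_hs A i j; have := Im_le_hs A i j; rewrite A0 !normr_le0.
by case: (A i j) => a b /= /eqP-> /eqP->.
Qed.

Lemma hs_norm0 : hs_norm (0 : 'M[R[i]]_N) = 0.
Proof.
rewrite hs_normE /hs2 big1 ?sqrtr0 // => i _; rewrite big1 // => j _.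
by rewrite mxE /sqmod /= expr0n addr0.
Qed.

Lemma hs_normZ z A : hs_norm (z *: A) = Num.sqrt (sqmod z) * hs_norm A.
Proof.
rewrite !hs_normE -sqrtrM ?sqmod_ge0 //; congr Num.sqrt.
rewrite /hs2 mulr_sumr; apply: eq_bigr => i _; rewrite mulr_sumr.
by apply: eq_bigr => j _; rewrite mxE sqmodM.
Qed.

Lemma hs_normN A : hs_norm (- A) = hs_norm A.
Proof.
rewrite -scaleN1r hs_normZ /sqmod /= oppr0 expr0n addr0 sqrtr_sqr.
by rewrite normrN normr1 mul1r.
Qed.

Lemma hs_normB A B : hs_norm (A - B) = hs_norm (B - A).
Proof. by rewrite -hs_normN opprB. Qed.

Definition hs_dot A B : R :=
  \sum_i \sum_j
    (complex.Re (A i j) * complex.Re (B i j) + complex.Im (A i j) * complex.Im (B i j)).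

Lemma hs2D A B : hs2 (A + B) = hs2 A + hs2 B + 2 * hs_dot A B.
Proof.
rewrite /hs2 /hs_dot mulr_sumr -!big_split; apply: eq_bigr => i _ /=.
rewrite mulr_sumr -!big_split; apply: eq_bigr => j _ /=.
by rewrite mxE /sqmod; case: (A i j) (B i j) => [a b] [c d] /=; ring.
Qed.

(* AM-GM with a free weight t, optimised below at t = |B| / |A|. *)
Lemma hs_dot_le_weighted A B t : 0 < t -> 2 * hs_dot A B <= t * hs2 A + hs2 B / t.
Proof.
move=> t_gt0; rewrite /hs_dot /hs2 mulr_sumr mulr_sumr mulr_suml -big_split.
apply: ler_sum => i _; rewrite mulr_sumr mulr_sumr mulr_suml -big_split.
apply: ler_sum => j _; rewrite /sqmod /=.
move: (complex.Re (A i j)) (complex.Im (A i j)) (complex.Re (B i j)) (complex.Im (B i j)).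
move=> a b c d.
have -> : t * (a ^+ 2 + b ^+ 2) + (c ^+ 2 + d ^+ 2) / t =
    2 * (a * c + b * d) + ((t * a - c) ^+ 2 + (t * b - d) ^+ 2) / t.
  by field; rewrite gt_eqF.
by rewrite lerDl divr_ge0 ?addr_ge0 ?sqr_ge0 ?ltW.
Qed.

Lemma hs_dot_le A B : hs_dot A B <= hs_norm A * hs_norm B.
Proof.
have [A0|A0] := eqVneq (hs_norm A) 0.
  rewrite A0 mul0r (hs_norm_eq0 A0) /hs_dot.
  by rewrite big1 // => i _; rewrite big1 // => j _; rewrite mxE /= !mul0r addr0.
have [B0|B0] := eqVneq (hs_norm B) 0.
  rewrite B0 mulr0 (hs_norm_eq0 B0) /hs_dot.
  by rewrite big1 // => i _; rewrite big1 // => j _; rewrite mxE /= !mulr0 addr0.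
have A_gt0 : 0 < hs_norm A by rewrite lt_def A0 hs_norm_ge0.
have B_gt0 : 0 < hs_norm B by rewrite lt_def B0 hs_norm_ge0.
have := hs_dot_le_weighted A B (divr_gt0 B_gt0 A_gt0); rewrite -!hs_norm_sqr.
have -> : hs_norm B / hs_norm A * hs_norm A ^+ 2 + hs_norm B ^+ 2 / (hs_norm B / hs_norm A)
    = 2 * (hs_norm A * hs_norm B) by field; rewrite A0 B0.
by rewrite ler_pM2l.
Qed.

Lemma hs_normD A B : hs_norm (A + B) <= hs_norm A + hs_norm B.
Proof.
rewrite -[hs_norm A + _]ger0_norm ?addr_ge0 ?hs_norm_ge0 // -sqrtr_sqr hs_normE.
rewrite ler_sqrt ?sqr_ge0 // hs2D sqrrD -!hs_norm_sqr.
by have := hs_dot_le A B; lra.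
Qed.

Lemma hs_norm_triangle A B C : hs_norm (A - C) <= hs_norm (A - B) + hs_norm (B - C).
Proof. by rewrite -[A - C](subrKA B); exact: hs_normD. Qed.

Lemma hs_norm_sum (I : Type) (r : seq I) (P : pred I) (F : I -> 'M[R[i]]_N) :
  hs_norm (\sum_(i <- r | P i) F i) <= \sum_(i <- r | P i) hs_norm (F i).
Proof.
elim/big_rec2: _ => [|i y X _ IH]; first by rewrite hs_norm0.
by apply: le_trans (hs_normD _ _) _; rewrite lerD2l.
Qed.

(* the Hilbert-Schmidt norm of the matrix with all entries 1 + i *)
Definition hs_box : R := Num.sqrt (2 *+ N *+ N).

Lemma hs_box_ge0 : 0 <= hs_box.
Proof. exact: sqrtr_ge0. Qed.

Lemma hs_norm_le_box A c : 0 <= c ->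
  (forall i j, `|complex.Re (A i j)| <= c /\ `|complex.Im (A i j)| <= c) ->
  hs_norm A <= hs_box * c.
Proof.
move=> c_ge0 Ac; rewrite -[c]ger0_norm // -sqrtr_sqr -sqrtrM ?mulrn_wge0 //.
rewrite hs_normE ler_sqrt ?mulr_ge0 ?mulrn_wge0 ?sqr_ge0 //.
have -> : 2 *+ N *+ N * c ^+ 2 = \sum_(i < N) \sum_(j < N) (2 * c ^+ 2).
  by rewrite sumr_const card_ord sumr_const card_ord -!mulrnAl.
apply: ler_sum => i _; apply: ler_sum => j _; rewrite /sqmod.
by case: (Ac i j); rewrite !ler_norml => /andP[? ?] /andP[? ?]; nra.
Qed.

Lemma mx_cauchy_limit (E : nat -> 'M[R[i]]_N) (e : nat -> R) :
  (forall m, 0 <= e m) ->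
  (forall m m', (m <= m')%N -> hs_norm (E m - E m') <= e m) ->
  exists Y, forall m, hs_norm (E m - Y) <= hs_box * e m.
Proof.
move=> e_ge0 E_cauchy.
pose Y := \matrix_(i, j) Complex (cauchy_sup (fun m => complex.Re (E m i j)) e)
                                  (cauchy_sup (fun m => complex.Im (E m i j)) e).
exists Y => m; apply: hs_norm_le_box => // i j; rewrite !mxE.
rewrite (raddfB (@complex.Re R)) (raddfB (@complex.Im R)) /=.
split; apply: cauchy_supP => // k k' kk'; apply: le_trans (E_cauchy _ _ kk').
  by have := Re_le_hs (E k - E k') i j; rewrite !mxE (raddfB (@complex.Re R)).
by have := Im_le_hs (E k - E k') i j; rewrite !mxE (raddfB (@complex.Im R)).
Qed.
End HilbertSchmidt.

Section LinearMap.
Variables (R : realType) (N : nat) (S : 'M[R[i]]_N -> 'M[R[i]]_N).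
Hypothesis S_linear : linear S.

HB.instance Definition _ := GRing.isLinear.Build R[i] 'M[R[i]]_N 'M[R[i]]_N _ S S_linear.

Lemma linB A B : S (A - B) = S A - S B.
Proof. exact: linearB. Qed.

Lemma hs_contraction_of_ratio (P : 'M[R[i]]_N -> Prop) (q : R) :
  (forall A, P A -> A != 0 -> hs_norm (S A) / hs_norm A <= q) ->
  forall A, P A -> hs_norm (S A) <= q * hs_norm A.
Proof.
move=> S_ratio A PA; have [->|A0] := eqVneq A 0.
  by rewrite linear0 hs_norm0 mulr0.
have A_gt0 : 0 < hs_norm A.
  by rewrite lt_def hs_norm_ge0 andbT; apply: contra A0 => /eqP/hs_norm_eq0->.
by rewrite -ler_pdivrMr //; exact: S_ratio.
Qed.

Lemma hs_norm_le_opnorm22 A : hs_norm (S A) <= opnorm22 S * hs_norm A.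
Proof.
pose K := \sum_i \sum_j hs_norm (S (delta_mx i j)).
have S_bounded B : hs_norm (S B) <= hs_norm B * K.
  rewrite {1}(matrix_sum_delta B) linear_sum; apply: le_trans (hs_norm_sum _ _ _) _.
  rewrite /K mulr_sumr; apply: ler_sum => i _; rewrite linear_sum.
  apply: le_trans (hs_norm_sum _ _ _) _; rewrite mulr_sumr; apply: ler_sum => j _.
  by rewrite linearZ hs_normZ ler_wpM2r ?hs_norm_ge0 ?sqrt_sqmod_le_hs.
have S_ub : has_ubound [set r | exists B, hs_norm B = 1 /\ r = hs_norm (S B)].
  by exists K => _ [B [B1 ->]]; rewrite -[K]mul1r -B1.
have [A0|A0] := eqVneq (hs_norm A) 0.
  by rewrite A0 mulr0 (hs_norm_eq0 A0) linear0 hs_norm0.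
have A_gt0 : 0 < hs_norm A by rewrite lt_def A0 hs_norm_ge0.
have normZA : hs_norm ((hs_norm A)^-1%:C%C *: A) = 1.
  by rewrite hs_normZ sqmod_real ger0_norm ?invr_ge0 ?hs_norm_ge0 // mulVf.
have : hs_norm (S ((hs_norm A)^-1%:C%C *: A)) <= opnorm22 S.
  by apply: (ub_le_sup S_ub); exists ((hs_norm A)^-1%:C%C *: A).
rewrite linearZ hs_normZ sqmod_real ger0_norm ?invr_ge0 ?hs_norm_ge0 //.
by rewrite mulrC -ler_pdivlMr ?invr_gt0 // invrK.
Qed.
End LinearMap.

Section Density.
Variables (R : realType) (N : nat).
Implicit Types (X Y : 'M[R[i]]_N).

Lemma sum_delta_l (F : 'I_N -> R[i]) p a : \sum_r ((r == p)%:R * a) * F r = a * F p.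
Proof.
rewrite (bigD1 p) //= eqxx mul1r big1 ?addr0 // => r /negbTE->.
by rewrite !mul0r.
Qed.

Lemma sum_delta_r (F : 'I_N -> R[i]) p a : \sum_r F r * ((r == p)%:R * a) = F p * a.
Proof. by under eq_bigr do rewrite mulrC; rewrite sum_delta_l mulrC. Qed.

(* the quadratic form of [X] on the vector [a e_p + b e_q] *)
Lemma psd_quad2 X : psd_mx X -> forall p q (a b : R[i]),
  0 <= conjc a * (X p p * a + X p q * b) + conjc b * (X q p * a + X q q * b).
Proof.
move=> X_psd p q a b; have := X_psd (fun r => (r == p)%:R * a + (r == q)%:R * b).
congr (_ <= _); under eq_bigr => r _.
  under eq_bigr do rewrite -mulrA.
  rewrite -mulr_sumr rmorphD !rmorphM !rmorph_nat mulrDl.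
  under eq_bigr do rewrite mulrDr.
  rewrite big_split /= !sum_delta_r.
  over.
by rewrite big_split /= !sum_delta_l.
Qed.

Lemma psd_entries X : psd_mx X -> forall p q,
  [/\ 0 <= complex.Re (X p p), X q p = conjc (X p q),
    `|2 * complex.Re (X p q)| <= complex.Re (X p p) + complex.Re (X q q) &
    `|2 * complex.Im (X p q)| <= complex.Re (X p p) + complex.Re (X q q)].
Proof.
move=> X_psd p q.
have := psd_quad2 X_psd p q 1 0; have := psd_quad2 X_psd p q 1 1.
have := psd_quad2 X_psd p q 1 (-1); have := psd_quad2 X_psd p q 1 'i%C.
have := psd_quad2 X_psd p q 1 (- 'i%C).
move: (X p p) (X p q) (X q p) (X q q) => [a1 a2] [b1 b2] [c1 c2] [d1 d2].
rewrite !lecE /= !(mulr0, mul0r, mulr1, mul1r, oppr0, addr0, add0r, subr0, sub0r,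
  mulN1r, mulrN1, opprK, mulrN, mulNr).
move=> /andP[/eqP e1 g1] /andP[/eqP e2 g2] /andP[/eqP e3 g3] /andP[/eqP e4 g4]
  /andP[/eqP e5 g5].
split; first by [].
- by congr Complex; lra.
- by rewrite ler_norml; apply/andP; split; lra.
- by rewrite ler_norml; apply/andP; split; lra.
Qed.

Lemma density_Re_diag_le1 X : density X -> forall p, complex.Re (X p p) <= 1.
Proof.
case=> X_psd X_tr p; have : complex.Re (\tr X) = 1 by rewrite X_tr.
rewrite /mxtrace (raddf_sum (@complex.Re R)) (bigD1 p) //= => <-.
by rewrite lerDl sumr_ge0 // => r _; case: (psd_entries X_psd r r).
Qed.

Lemma density_entry_bound X : density X -> forall p q,
  `|complex.Re (X p q)| <= 1 /\ `|complex.Im (X p q)| <= 1.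
Proof.
move=> dX p q; have [_ _] := psd_entries dX.1 p q.
have := density_Re_diag_le1 dX p; have := density_Re_diag_le1 dX q.
by rewrite !normrM [`|2|]ger0_norm //; split; lra.
Qed.

Lemma density_hs_le X : density X -> hs_norm X <= hs_box R N.
Proof.
move=> dX; rewrite -[hs_box _ _]mulr1.
by apply: hs_norm_le_box => //; exact: density_entry_bound.
Qed.

Lemma density_sub_hs_le X Y : density X -> density Y -> hs_norm (X - Y) <= 2 * hs_box R N.
Proof.
move=> dX dY; apply: le_trans (hs_normD _ _) _; rewrite hs_normN mulr_natl mulr2n.
by rewrite lerD ?density_hs_le.
Qed.

Lemma density_sub_traceless X Y : density X -> density Y -> traceless_herm (X - Y).
Proof.
move=> dX dY; split; last by rewrite linearB /= dX.2 dY.2 subrr.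
move=> p q; rewrite !mxE rmorphB.
by have [_ -> _ _] := psd_entries dX.1 p q; have [_ -> _ _] := psd_entries dY.1 p q.
Qed.

Lemma density_delta i : density (delta_mx i i : 'M[R[i]]_N).
Proof.
split.
  move=> v; rewrite (bigD1 i) //= [X in _ + X]big1 => [|p /negbTE pi]; last first.
    by rewrite big1 // => q _; rewrite mxE pi /= mulr0 mul0r.
  rewrite (bigD1 i) //= big1 => [|q /negbTE qi]; last by rewrite mxE qi andbF mulr0 mul0r.
  by rewrite mxE !eqxx mulr1 !addr0 mulrC mulcJ_ge0.
rewrite /mxtrace (bigD1 i) //= big1 => [|p /negbTE pi]; last by rewrite mxE pi.
by rewrite mxE !eqxx addr0.
Qed.

Lemma psd_pair1 (I : finType) (Y : I -> I -> R[i]) :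
  psd_fun (fun p q : 'I_1 * I => Y p.2 q.2) <-> psd_fun Y.
Proof.
have sum_pair1 (F : 'I_1 * I -> R[i]) : \sum_p F p = \sum_i F (ord0, i).
  rewrite (eq_bigr (fun p => F (p.1, p.2))) => [|[] //].
  by rewrite -(pair_bigA _ (fun a b => F (a, b))) big_ord1.
have quadE (v : 'I_1 * I -> R[i]) : \sum_p \sum_q conjc (v p) * Y p.2 q.2 * v q =
    \sum_i \sum_j conjc (v (ord0, i)) * Y i j * v (ord0, j).
  by rewrite sum_pair1; apply: eq_bigr => i _; rewrite sum_pair1.
split=> Y_psd v; first by have := Y_psd (fun p => v p.2); rewrite quadE.
by rewrite quadE; exact: (Y_psd (fun i => v (ord0, i))).
Qed.

Lemma CPTP_density (S : 'M[R[i]]_N -> 'M[R[i]]_N) X : CPTP S -> density X -> density (S X).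
Proof.
case=> _ [S_cp S_tp] [X_psd X_tr]; split; last by rewrite S_tp.
apply/(psd_pair1 (fun p q => S X p q)).
have := S_cp 1%N (fun p q => X p.2 q.2) (proj2 (psd_pair1 (fun p q => X p q)) X_psd).
congr psd_fun; apply/funext => p; apply/funext => q; congr (S _ _ _).
by apply/matrixP => i j; rewrite mxE.
Qed.
End Density.

Lemma cvg_geometricS (R : realType) (K q : R) : 0 <= q < 1 ->
  (fun m => K * q ^+ m.+1) @ \oo --> (0 : R).
Proof.
case/andP=> q_ge0 q_lt1.
have -> : (fun m => K * q ^+ m.+1) = geometric (K * q) q.
  by apply/funext => m; rewrite /= exprS mulrA.
by apply: cvg_geometric; rewrite ger0_norm.
Qed.

Lemma linear_subfun (R : realType) (N : nat) (S1 S2 : 'M[R[i]]_N -> 'M[R[i]]_N) :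
  linear S1 -> linear S2 -> linear (fun A => S1 A - S2 A).
Proof. by move=> S1_lin S2_lin a A B; rewrite S1_lin S2_lin scalerBr opprD addrACA. Qed.

Section Evolve.
Variables (R : realType) (N : nat) (T : R -> 'M[R[i]]_N -> 'M[R[i]]_N).
Implicit Types (u v : int -> R) (X : 'M[R[i]]_N).

Lemma evolve_split u k m j X :
  evolve T u k (m + j).+1 X = evolve T u k m (evolve T u (k - m%:Z - 1) j X).
Proof.
elim: m k => [|m IH] k; first by rewrite add0n /= subr0.
rewrite addSn -[LHS]/(T (u k) (evolve T u (k - 1) (m + j).+1 X)) IH /=.
by congr (T _ (evolve _ _ _ _ (evolve _ _ _ _ _))); rewrite -[m.+1]addn1 PoszD; ring.
Qed.

Lemma evolve_shift u k m X :
  evolve T (fun j => u (j + 1)) k m X = evolve T u (k + 1) m X.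
Proof.
by elim: m k => [|m IH] k //=; rewrite IH; congr (T _ (evolve _ _ _ _ _)); ring.
Qed.

Lemma evolve_causal u v k : (forall j, j <= k -> u j = v j) ->
  forall m X, evolve T u k m X = evolve T v k m X.
Proof.
move=> uv m; elim: m k uv => [|m IH] k uv X /=; rewrite uv // IH // => j jk.
by apply: uv; apply: le_trans jk _; rewrite gerBl.
Qed.

Lemma limit_state_shift u k :
  limit_state T (fun j => u (j + 1)) k = limit_state T u (k + 1).
Proof.
rewrite /limit_state; congr (xget 0 _); apply/funext => Y /=.
by rewrite (funext (fun m => funext (evolve_shift u k m))).
Qed.

Lemma limit_state_causal u v k : (forall j, j <= k -> u j = v j) ->
  limit_state T u k = limit_state T v k.
Proof.
move=> uv; rewrite /limit_state; congr (xget 0 _); apply/funext => Y /=.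
by rewrite (funext (fun m => funext (evolve_causal uv m))).
Qed.
End Evolve.

Section Contraction.
Variables (R : realType) (N : nat) (T : R -> 'M[R[i]]_N -> 'M[R[i]]_N) (Dx : set R) (q : R).
Hypotheses (N_gt0 : (0 < N)%N) (q_ge0 : 0 <= q) (q_lt1 : q < 1).
Hypothesis T_CPTP : forall x, Dx x -> CPTP (T x).
Hypothesis T_contract : forall x, Dx x ->
  forall A, traceless_herm A -> hs_norm (T x A) <= q * hs_norm A.
Implicit Types (u v : int -> R) (s : 'M[R[i]]_N).

Let rho0 : 'M[R[i]]_N := delta_mx (Ordinal N_gt0) (Ordinal N_gt0).
Let rho0_density : density rho0 := density_delta _ _.

Definition limit_rate : R := 2 * hs_box R N * (1 + hs_box R N).

Lemma limit_rate_ge0 : 0 <= limit_rate.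
Proof. by rewrite !mulr_ge0 ?addr_ge0 ?hs_box_ge0. Qed.

Lemma limit_state_eq u k (Y : 'M[R[i]]_N) (K : R) :
  (forall s m, density s -> hs_norm (evolve T u k m s - Y) <= K * q ^+ m.+1) ->
  limit_state T u k = Y.
Proof.
move=> Y_lim; have q01 : 0 <= q < 1 by rewrite q_ge0.
apply: xget_unique => [rho rho_density|Y' Y'_lim].
  apply: (@squeeze_cvgr _ _ _ _ (cst 0) (fun m => K * q ^+ m.+1)).
  - by apply: nearW => m; rewrite hs_norm_ge0 Y_lim.
  - exact: cvg_cst.
  - exact: cvg_geometricS.
pose a m := hs_norm (evolve T u k m rho0 - Y') + K * q ^+ m.+1.
have a_cvg : a @ \oo --> (0 : R).
  by rewrite -[0 : R]addr0; apply: cvgD; [exact: Y'_lim | exact: cvg_geometricS].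
have : hs_norm (Y' - Y) <= lim (a @ \oo).
  apply: limr_ge; first exact: cvgP a_cvg.
  apply: nearW => m; rewrite hs_normB.
  apply: le_trans (hs_norm_triangle _ (evolve T u k m rho0) _) _.
  by rewrite addrC lerD2l hs_normB Y_lim.
rewrite (cvg_lim _ a_cvg) // => Y'Y_le0.
by apply/eqP; rewrite -subr_eq0; apply/eqP/hs_norm_eq0/le_anti; rewrite Y'Y_le0 hs_norm_ge0.
Qed.

Section FixedInput.
Variable u : int -> R.
Hypothesis u_in : forall k, Dx (u k).

Lemma evolve_density k m s : density s -> density (evolve T u k m s).
Proof.
by move=> s_density; elim: m k => [|m IH] k /=; apply: CPTP_density (T_CPTP (u_in k)) _.
Qed.

Lemma evolve_contract k m s1 s2 : density s1 -> density s2 ->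
  hs_norm (evolve T u k m s1 - evolve T u k m s2) <= q ^+ m.+1 * hs_norm (s1 - s2).
Proof.
move=> s1_density s2_density; elim: m k => [|m IH] k /=.
  rewrite -(linB (T_CPTP (u_in k)).1) expr1.
  exact: T_contract (u_in k) _ (density_sub_traceless s1_density s2_density).
have E_traceless := density_sub_traceless (evolve_density (k - 1) m s1_density)
  (evolve_density (k - 1) m s2_density).
rewrite -(linB (T_CPTP (u_in k)).1); apply: le_trans (T_contract (u_in k) E_traceless) _.
by rewrite exprS -mulrA ler_wpM2l.
Qed.

Lemma evolve_cauchy k m m' s s' : (m <= m')%N -> density s -> density s' ->
  hs_norm (evolve T u k m s - evolve T u k m' s') <= 2 * hs_box R N * q ^+ m.+1.
Proof.
move=> mm' s_density s'_density.
have [s'' s''_density ->] : exists2 s'', density s'' & evolve T u k m' s' = evolve T u k m s''.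
  move: mm'; rewrite leq_eqVlt => /orP[/eqP<-|mm']; first by exists s'.
  exists (evolve T u (k - m%:Z - 1) (m' - m.+1) s'); first exact: evolve_density.
  by rewrite -evolve_split -addSn subnKC.
apply: le_trans (evolve_contract _ _ s_density s''_density) _.
by rewrite mulrC ler_wpM2r ?exprn_ge0 ?density_sub_hs_le.
Qed.

Lemma limit_state_bound k m s : density s ->
  hs_norm (evolve T u k m s - limit_state T u k) <= limit_rate * q ^+ m.+1.
Proof.
pose e i := 2 * hs_box R N * q ^+ i.+1.
have e_ge0 i : 0 <= e i by rewrite !mulr_ge0 ?exprn_ge0 ?hs_box_ge0.
have [Y Y_lim] := mx_cauchy_limit e_ge0
  (fun i i' ii' => evolve_cauchy k ii' rho0_density rho0_density).
suff Y_bound s' m' : density s' -> hs_norm (evolve T u k m' s' - Y) <= limit_rate * q ^+ m'.+1.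
  by rewrite (limit_state_eq Y_bound); exact: Y_bound.
move=> s'_density; apply: le_trans (hs_norm_triangle _ (evolve T u k m' rho0) _) _.
have := evolve_cauchy k (leqnn m') s'_density rho0_density; have := Y_lim m'.
by rewrite /e /limit_rate; nra.
Qed.
End FixedInput.

Lemma step_input_stability x y s (eta : R) : Dx x -> Dx y -> 0 <= eta -> density s ->
  opnorm22 (fun A => T x A - T y A) <= eta -> hs_norm (T x s - T y s) <= hs_box R N * eta.
Proof.
move=> x_in y_in eta_ge0 s_density xy_close.
have xy_linear := linear_subfun (T_CPTP x_in).1 (T_CPTP y_in).1.
apply: le_trans (hs_norm_le_opnorm22 xy_linear s) _.
apply: le_trans (ler_wpM2r (hs_norm_ge0 s) xy_close) _.
by rewrite mulrC ler_wpM2r ?density_hs_le.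
Qed.

Lemma evolve_input_stability u v k m s (eta : R) :
  (forall k, Dx (u k)) -> (forall k, Dx (v k)) -> 0 <= eta -> density s ->
  (forall j, (j <= m)%N ->
     opnorm22 (fun A => T (u (k - j%:Z)) A - T (v (k - j%:Z)) A) <= eta) ->
  hs_norm (evolve T u k m s - evolve T v k m s) <= m.+1%:R * (hs_box R N * eta).
Proof.
move=> u_in v_in eta_ge0 s_density; elim: m k => [|m IH] k uv_close /=.
  by rewrite mul1r; apply: step_input_stability; rewrite // -[k]subr0; exact: uv_close.
set E1 := evolve T u (k - 1) m s; set E2 := evolve T v (k - 1) m s.
have E_close : hs_norm (E1 - E2) <= m.+1%:R * (hs_box R N * eta).
  apply: IH => j jm; have := uv_close j.+1 jm.
  by rewrite -[j.+1]addn1 PoszD opprD addrA [_ - 1 - _]addrAC.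
have E_traceless := density_sub_traceless (evolve_density u_in (k - 1) m s_density)
  (evolve_density v_in (k - 1) m s_density).
have step1 := T_contract (u_in k) E_traceless; rewrite (linB (T_CPTP (u_in k)).1) in step1.
have step2 := step_input_stability (u_in k) (v_in k) eta_ge0
  (evolve_density v_in (k - 1) m s_density).
rewrite -[m.+2%:R]natr1 mulrDl mul1r -(subrKA (T (u k) E2)).
apply: le_trans (hs_normD _ _) (lerD _ (step2 _)); last by rewrite -[k]subr0; exact: uv_close.
apply: le_trans step1 (le_trans _ E_close).
by rewrite ler_piMl ?hs_norm_ge0 ?ltW.
Qed.

Lemma limit_state_input_stability u k (e : R) : (forall k, Dx (u k)) -> 0 < e ->
  exists m, exists2 eta : R, 0 < eta & forall v, (forall k, Dx (v k)) ->
    (forall j, (j <= m)%N ->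
       opnorm22 (fun A => T (u (k - j%:Z)) A - T (v (k - j%:Z)) A) <= eta) ->
    hs_norm (limit_state T v k - limit_state T u k) < e.
Proof.
move=> u_in e_gt0; have e4_gt0 : 0 < e / 4 by rewrite divr_gt0.
have q01 : 0 <= q < 1 by rewrite q_ge0.
have [m _ /(_ m (leqnn m))] := cvgr0_norm_lt _ (cvg_geometricS limit_rate q01) _ e4_gt0.
rewrite /= ger0_norm ?(mulr_ge0 limit_rate_ge0) ?exprn_ge0 // => tail_small.
have B1_gt0 : 0 < hs_box R N + 1 by rewrite ltr_wpDl ?hs_box_ge0.
(* e = e/4 (tail for u) + e/2 (the first m + 1 steps) + e/4 (tail for v) *)
pose eta := e / (2 * (m.+1%:R * (hs_box R N + 1))).
have eta_gt0 : 0 < eta by rewrite divr_gt0 // !mulr_gt0.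
exists m, eta => // v v_in uv_close.
have uv_evolve := evolve_input_stability u_in v_in (ltW eta_gt0) rho0_density uv_close.
have u_tail := limit_state_bound u_in k m rho0_density.
have v_tail := limit_state_bound v_in k m rho0_density.
have eta_small : m.+1%:R * (hs_box R N * eta) <= e / 2.
  have -> : m.+1%:R * (hs_box R N * eta) = e / 2 * (hs_box R N / (hs_box R N + 1)).
    by rewrite /eta; field; rewrite gt_eqF //= gt_eqF // ltr_wpDr ?ler0n.
  apply: ler_piMr; first by rewrite divr_ge0 ?ltW.
  by rewrite ler_pdivrMr // mul1r lerDl.
rewrite hs_normB; apply: le_lt_trans (hs_norm_triangle _ (evolve T u k m rho0) _) _.
apply: le_lt_trans (lerD (lexx _) (hs_norm_triangle _ (evolve T v k m rho0) _)) _.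
rewrite [hs_norm (limit_state T u k - _)]hs_normB.
apply: le_lt_trans (lerD u_tail (lerD uv_evolve v_tail)) _.
have -> : e = e / 4 + (e / 2 + e / 4) by field.
exact: ltr_leD tail_small (lerD eta_small (ltW tail_small)).
Qed.
End Contraction.

Section BoxContinuity.
Variables (R : realType) (I : Type).

Definition box_nbhs (z : I -> R) : set_system (I -> R) :=
  filter_from [set d : R | 0 < d] (fun d => [set y | forall i, `|z i - y i| < d]).

Global Instance box_nbhs_filter z : ProperFilter (box_nbhs z).
Proof.
apply: filter_from_proper => [|d d_gt0]; last by exists z => i; rewrite subrr normr0.
apply: filter_from_filter; first by exists 1; rewrite /= ltr01.
move=> d1 d2 d1_gt0 d2_gt0; exists (Num.min d1 d2); first by rewrite /= lt_min d1_gt0 d2_gt0.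
by move=> y yd; split=> i; have := yd i; rewrite lt_min => /andP[].
Qed.

Lemma cvg_coord (z : I -> R) i : (fun y => y i) @ box_nbhs z --> z i.
Proof. by apply/cvgrPdist_lt => e e_gt0; exists e. Qed.

Lemma box_continuity (f : (I -> R) -> R) z : f @ box_nbhs z --> f z ->
  forall e : R, 0 < e -> exists2 d : R, 0 < d &
    forall y, (forall i, `|z i - y i| < d) -> `|f z - f y| < e.
Proof. by move=> /cvgrPdist_lt f_cvg e /f_cvg[d d_gt0 fd]; exists d. Qed.
End BoxContinuity.

Lemma cvg_poly_box (R : realType) (I J : finType) (P : pred J) (c : J -> R)
    (a : J -> I -> nat) (z : I -> R) :
  (fun y => \sum_(j | P j) c j * \prod_i y i ^+ a j i) @ box_nbhs z -->
  \sum_(j | P j) c j * \prod_i z i ^+ a j i.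
Proof.
apply: cvg_big => [|j _]; first exact: add_continuous.
apply: cvgM; first exact: cvg_cst.
apply: cvg_big => [|i _]; first exact: mul_continuous.
exact: (continuous_cvg _ (@exprn_continuous R (a j i) (z i)) (@cvg_coord R I z i)).
Qed.

Section PauliZ.
Variables (R : realType) (n : nat).
Implicit Types (A B : Mat R n).

Lemma expZB A B i : expZ A i - expZ B i = expZ (A - B) i.
Proof. by rewrite /expZ mulmxBl linearB /= (raddfB (@complex.Re R)). Qed.

Lemma norm_expZ_le A i : `|expZ A i| <= (2 ^ n)%:R * hs_norm A.
Proof.
rewrite /expZ /mxtrace (raddf_sum (@complex.Re R)); apply: le_trans (ler_norm_sum _ _ _) _.
have -> : (2 ^ n)%:R * hs_norm A = \sum_(j < 2 ^ n) hs_norm A.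
  by rewrite sumr_const card_ord mulr_natl.
apply: ler_sum => j _.
rewrite mxE (bigD1 j) //= big1 => [|k /negbTE kj]; last by rewrite mxE kj mul0r mulr0.
rewrite mxE eqxx mul1r addr0; apply: le_trans (Re_le_hs A j j).
by case: ifP => _; rewrite ?mulr1 // mulrN1 (raddfN (@complex.Re R)) normrN.
Qed.
End PauliZ.

Lemma poly_obs_continuous (R : realType) (n d : nat) (c : {ffun 'I_n -> 'I_d.+1} -> R)
    (Y : Mat R n) (e : R) : 0 < e ->
  exists2 dY : R, 0 < dY &
    forall Y', hs_norm (Y' - Y) < dY -> `|poly_obs c Y - poly_obs c Y'| < e.
Proof.
move=> e_gt0; have N_gt0 : (0 : R) < (2 ^ n)%:R by rewrite ltr0n expn_gt0.
have [dz dz_gt0 poly_cont] := box_continuity (@cvg_poly_box R _ _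
  [pred a : {ffun 'I_n -> 'I_d.+1} | (\sum_i (a i : nat) <= d)%N] c
  (fun a i => a i) (expZ Y)) e_gt0.
exists (dz / (2 ^ n)%:R) => [|Y' YY']; first by rewrite divr_gt0.
apply: poly_cont => i; rewrite expZB; apply: le_lt_trans (norm_expZ_le _ _) _.
by rewrite -ltr_pdivlMl // mulrC hs_normB.
Qed.

Section InputSequences.
Variable R : realType.
Implicit Types (D : set R) (L : R) (u : nat -> R).

Lemma DL_norm_le D L x : DL D L x -> `|x| <= L.
Proof. by case=> _; rewrite /= in_itv /= ler_norml. Qed.

Lemma extend_KL D L u : KLm D L u -> KL D L (extend u).
Proof. by move=> u_in [] k; apply: u_in. Qed.

Lemma extend_neg u j : extend u (0 - j%:Z) = u j.
Proof. by case: j => [|j] //; rewrite sub0r -NegzE. Qed.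

Lemma wnorm_lt_coord (w u : nat -> R) (B d : R) m :
  (forall j, 0 < w j <= 1) -> (forall j, w j.+1 <= w j) -> (forall j, `|u j| <= B) ->
  0 <= d -> wnorm w u < d * w m -> forall j, (j <= m)%N -> `|u j| < d.
Proof.
move=> w_bnd /nonincreasing_seqP w_dec u_bnd d_ge0 u_small j jm.
have /andP[w_gt0 w_le1] := w_bnd j.
have u_ub : has_ubound (range (fun j => `|u j| * w j)).
  exists B => _ [i _ <-]; have /andP[_ wi_le1] := w_bnd i.
  exact: le_trans (ler_piMr (normr_ge0 _) wi_le1) (u_bnd i).
rewrite -(ltr_pM2r w_gt0); apply: le_lt_trans (ub_le_sup u_ub _) _; first by exists j.
by apply: lt_le_trans u_small _; rewrite ler_wpM2l // w_dec.
Qed.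
End InputSequences.

Lemma functional_w_continuous (R : realType) (n : nat) (L : R) (D : set R)
    (T : R -> Mat R n -> Mat R n) (d : nat) (c : {ffun 'I_n -> 'I_d.+1} -> R)
    (q : R) (w : nat -> R) :
  0 <= q < 1 -> (forall x, DL D L x -> CPTP (T x)) ->
  (forall x, DL D L x ->
     forall A, traceless_herm A -> hs_norm (T x A) <= q * hs_norm A) ->
  (forall eps' : R, 0 < eps' -> exists2 delta : R, 0 < delta &
     forall x y, DL D L x -> DL D L y -> `|x - y| < delta ->
       opnorm22 (fun A => T x A - T y A) < eps') ->
  (forall j, 0 < w j <= 1) -> (forall j, w j.+1 <= w j) ->
  w_continuous D L w (functional (induced_filter T (poly_obs c))).
Proof.
move=> /andP[q_ge0 q_lt1] T_CPTP T_contract T_cont w_bnd w_dec u u_in e e_gt0.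
have [dY dY_gt0 obs_cont] := poly_obs_continuous c (limit_state T (extend u) 0) e_gt0.
have N_gt0 : (0 < 2 ^ n)%N by rewrite expn_gt0.
have [m [eta eta_gt0 Y_stable]] := limit_state_input_stability N_gt0 q_ge0 q_lt1
  T_CPTP T_contract 0 (extend_KL u_in) dY_gt0.
have [dT dT_gt0 T_close] := T_cont eta eta_gt0.
exists (dT * w m) => [|v v_in uv_small]; first by rewrite mulr_gt0 //; case/andP: (w_bnd m).
have uv_bnd j : `|(u - v) j| <= L + L.
  by apply: le_trans (ler_normB _ _) (lerD _ _); apply: DL_norm_le.
have uv_close := wnorm_lt_coord w_bnd w_dec uv_bnd (ltW dT_gt0) uv_small.
have uv_op j : (j <= m)%N ->
    opnorm22 (fun A => T (extend u (0 - j%:Z)) A - T (extend v (0 - j%:Z)) A) <= eta.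
  move=> jm; apply/ltW/T_close; rewrite !extend_neg; [exact: u_in|exact: v_in|].
  exact: uv_close.
exact: obs_cont (Y_stable _ (extend_KL v_in) uv_op).
Qed.

Theorem lemma3 (R : realType) (n : nat) (L : R) (D : set R)
    (T : R -> Mat R n -> Mat R n) (d : nat) (c : {ffun 'I_n -> 'I_d.+1} -> R) :
  (1 <= n)%N -> 0 < L -> compact D ->
  (forall x, DL D L x -> CPTP (T x)) ->
  (* (i) strict contraction on traceless Hermitian matrices *)
  (exists2 eps : R, 0 < eps <= 1 &
     forall x, DL D L x -> forall A : Mat R n, traceless_herm A -> A != 0 ->
       hs_norm (T x A) / hs_norm A <= 1 - eps) ->
  (* (ii) uniform continuity of T in the induced 2-2 norm *)
  (forall eps' : R, 0 < eps' -> exists2 delta : R, 0 < delta &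
     forall x y, DL D L x -> DL D L y -> `|x - y| < delta ->
       opnorm22 (fun A => T x A - T y A) < eps') ->
  forall w : nat -> R, null_seq w ->
    fading_memory_filter D L w (induced_filter T (poly_obs c)) /\
    w_continuous D L w (functional (induced_filter T (poly_obs c))).
Proof.
move=> _ _ _ T_CPTP [eps /andP[eps_gt0 eps_le1] T_ratio] T_cont w [w_bnd [w_dec _]].
have q01 : 0 <= 1 - eps < 1 by rewrite subr_ge0 eps_le1 ltrBlDr ltrDl.
have T_contract x (x_in : DL D L x) :=
  hs_contraction_of_ratio (T_CPTP x x_in).1 (T_ratio x x_in).
have wc := functional_w_continuous c q01 T_CPTP T_contract T_cont w_bnd w_dec.
split; last exact: wc.
split; [|split]; last exact: wc.
- by move=> u k _; rewrite /induced_filter limit_state_shift.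
- by move=> u v k _ _ uv; rewrite /induced_filter (limit_state_causal _ uv).
Qed.
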